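(* Let $\tau>0$, let $\Gamma^0$ be a closed polyhedral surface with $\boldsymbol X^0\in[\mathbb K^0]^3$ the identity and $\mathcal H^0\in\mathbb K^0$ given, and let $\alpha^m\ge0$ for all $m\ge0$. Suppose that for each $m\ge0$, $(\boldsymbol X^{m+1},V^{m+1},\beta_1^{m+1},\beta_2^{m+1},\mathcal H^{m+1})\in[\mathbb K^m]^3\times(\mathbb K^m)^4$ satisfies $$\Big(\tfrac{\boldsymbol X^{m+1}-\boldsymbol X^m}{\tau}\cdot\boldsymbol n^m,\phi^h\Big)^h_{\Gamma^m}=(V^{m+1},\phi^h)^h_{\Gamma^m}\quad\forall\phi^h\in\mathbb K^m,$$ $$\big((\boldsymbol X^{m+1}-\boldsymbol X^m)\cdot\boldsymbol\tau_i^m,\psi_i^h\big)^h_{\Gamma^m}=0,\quad i=1,2,\quad\forall\psi_1^h,\psi_2^h\in\mathbb K^m,$$ $$\Big(V^{m+1}\boldsymbol n^m+\alpha^m\sum_{i=1,2}\beta_i^{m+1}\boldsymbol\tau_i^m,\boldsymbol\omega^h\Big)^h_{\Gamma^m}=\Big\langle\mathcal H^{m+1}\mathbf A^m-\boldsymbol n^m(\nabla_\Gamma\mathcal H^{m+1})^T-\tfrac12(\mathcal H^{m+1})^2\nabla_\Gamma\boldsymbol X^{m+1},\nabla_\Gamma\boldsymbol\omega^h\Big\rangle^h_{\Gamma^m}\quad\forall\boldsymbol\omega^h\in[\mathbb K^m]^3,$$ $$(\mathcal H^{m+1}-\mathcal H^m,\varphi^h)^h_{\Gamma^m}=\big\langle\nabla_\Gamma(\boldsymbol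 X^{m+1}-\boldsymbol X^m),\boldsymbol n^m(\nabla_\Gamma\varphi^h)^T-\varphi^h\mathbf A^m\big\rangle^h_{\Gamma^m}\quad\forall\varphi^h\in\mathbb K^m,$$ and $\Gamma^{m+1}:=\boldsymbol X^{m+1}(\Gamma^m)$ is again a polyhedral surface with nondegenerate triangles. Then for every $\tau>0$ the discrete Willmore energy $W^m:=\frac12(\mathcal H^m,\mathcal H^m)^h_{\Gamma^m}$ satisfies $W^{m+1}\le W^m\le W^0$ for all $m\ge0$.
   Context: Polyhedral setting: $\Gamma^m=\bigcup_{j=1}^J\overline{\sigma_j^m}\subset\mathbb R^3$ is a closed polyhedral surface made of nonoverlapping nondegenerate triangles $\sigma_j^m$ with vertices $\boldsymbol q^m_{j_1},\boldsymbol q^m_{j_2},\boldsymbol q^m_{j_3}$, ordered so that $\mathcal J\{\sigma_j^m\}=(\boldsymbol q^m_{j_2}-\boldsymbol q^m_{j_1})\times(\boldsymbol q^m_{j_3}-\boldsymbol q^m_{j_1})$ points outward; $|\sigma_j^m|=\frac12|\mathcal J\{\sigma_j^m\}|$, and $\boldsymbol n^m|_{\sigma_j^m}=\mathcal J\{\sigma_j^m\}/|\mathcal J\{\sigma_j^m\}|$ (piecewise constant outward normal). Tangent fields: $\boldsymbol\tau_1^m|_{\sigma_j^m}=\frac{\boldsymbol q^m_{j_2}-\boldsymbol q^m_{j_1}}{|\boldsymbol q^m_{j_2}-\boldsymbol q^m_{j_1}|}$, $\boldsymbol\tau_2^m|_{\sigma_j^m}=\frac{\boldsymbol q^m_{j_3}-\boldsymbol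 q^m_{j_1}}{|\boldsymbol q^m_{j_3}-\boldsymbol q^m_{j_1}|}$. $\mathbb K^m$ is the space of continuous functions on $\Gamma^m$ that are affine on each triangle. $\boldsymbol X^m\in[\mathbb K^m]^3$ is the identity on $\Gamma^m$; $\boldsymbol X^{m+1}\in[\mathbb K^m]^3$ parameterizes $\Gamma^{m+1}$ with triangles $\sigma_j^{m+1}=\boldsymbol X^{m+1}(\sigma_j^m)$ (same connectivity), so functions in $\mathbb K^m$ and $\mathbb K^{m+1}$ are identified through their vertex values. Discrete surface gradient on $\Gamma^m$: for $g\in\mathbb K^m$, on a triangle $\sigma=\{\boldsymbol q_1,\boldsymbol q_2,\boldsymbol q_3\}$ with normal $\boldsymbol n$, $$\nabla_\Gamma g|_\sigma=\frac{g(\boldsymbol q_1)(\boldsymbol q_2-\boldsymbol q_3)\times\boldsymbol n+g(\boldsymbol q_2)(\boldsymbol q_3-\boldsymbol q_1)\times\boldsymbol n+g(\boldsymbol q_3)(\boldsymbol q_1-\boldsymbol q_2)\times\boldsymbol n}{|\mathcal J\{\sigma\}|};$$ for vector functions $\nabla_\Gamma\boldsymbol g$ is the matrix with $i$-th row $(\nabla_\Gamma g_i)^T$. $\mathbf A^m=\nabla_\Gamma\boldsymbol w^m$ where $\boldsymbol w^m\in[\mathbb K^m]^3$ is a given (vertex unit normal) field. Mass-lumped inner products: for scalar/vector functions $u,v$ continuous on each closed triangle, $$(u,v)^h_{\Gamma^m}=\tfrac13\sum_{j=1}^J\sum_{k=1}^3|\sigma_j^m|\,u((\boldsymbol q^m_{j_k})^-)\cdot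 v((\boldsymbol q^m_{j_k})^-),$$ and for matrix functions $\langle\boldsymbol U,\boldsymbol V\rangle^h_{\Gamma^m}=\tfrac13\sum_j\sum_k|\sigma_j^m|\,\boldsymbol U((\boldsymbol q^m_{j_k})^-):\boldsymbol V((\boldsymbol q^m_{j_k})^-)$, where $g((\boldsymbol q)^-)$ is the limit at vertex $\boldsymbol q$ from within $\sigma_j^m$ and $\boldsymbol U:\boldsymbol V=\mathrm{Tr}(\boldsymbol U^T\boldsymbol V)$. *)

From HB Require Import structures.
From mathcomp Require Import all_boot all_order all_algebra.
From mathcomp Require Import reals.
Set Implicit Arguments. Unset Strict Implicit. Unset Printing Implicit Defensive.
Import Order.TTheory GRing.Theory Num.Theory.
Local Open Scope ring_scope.

Notation vec R := 'rV[R]_3.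

Definition i0 : 'I_3 := @Ordinal 3 0 isT.
Definition i1 : 'I_3 := @Ordinal 3 1 isT.
Definition i2 : 'I_3 := @Ordinal 3 2 isT.
Definition nxt (k : 'I_3) : 'I_3 :=
  if k == i0 then i1 else if k == i1 then i2 else i0.

Definition dot {R : realType} (u v : vec R) : R := \sum_(i < 3) u 0 i * v 0 i.
Definition vnorm {R : realType} (u : vec R) : R := Num.sqrt (dot u u).
Definition cross {R : realType} (u v : vec R) : vec R :=
  \row_(i < 3) (if i == i0 then u 0 i1 * v 0 i2 - u 0 i2 * v 0 i1
                else if i == i1 then u 0 i2 * v 0 i0 - u 0 i0 * v 0 i2
                else u 0 i0 * v 0 i1 - u 0 i1 * v 0 i0).
Definition frob {R : realType} (U V : 'M[R]_3) : R := \tr (U^T *m V).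

(* A mesh: N vertices, J triangles; tri j k is the k-th vertex (k = 0,1,2 for
   q_{j_1}, q_{j_2}, q_{j_3}) of triangle j.  Positions P : 'I_N -> vec R
   (this is the parameterization X^m of Gamma^m by vertex values).
   Elements of K^m are identified with their vertex values 'I_N -> R. *)
Section Mesh.
Variables (R : realType) (N J : nat) (tri : 'I_J -> 'I_3 -> 'I_N) (P : 'I_N -> vec R).

Definition mesh_vtx (j : 'I_J) (k : 'I_3) : vec R := P (tri j k).
Definition mesh_jac (j : 'I_J) : vec R := cross (mesh_vtx j i1 - mesh_vtx j i0) (mesh_vtx j i2 - mesh_vtx j i0).
Definition mesh_area (j : 'I_J) : R := vnorm (mesh_jac j) / 2.
Definition mesh_normal (j : 'I_J) : vec R := (vnorm (mesh_jac j))^-1 *: mesh_jac j.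
Definition mesh_tau1 (j : 'I_J) : vec R :=
  (vnorm (mesh_vtx j i1 - mesh_vtx j i0))^-1 *: (mesh_vtx j i1 - mesh_vtx j i0).
Definition mesh_tau2 (j : 'I_J) : vec R :=
  (vnorm (mesh_vtx j i2 - mesh_vtx j i0))^-1 *: (mesh_vtx j i2 - mesh_vtx j i0).

Definition mesh_sgrad (g : 'I_N -> R) (j : 'I_J) : vec R :=
  (vnorm (mesh_jac j))^-1 *:
    (g (tri j i0) *: cross (mesh_vtx j i1 - mesh_vtx j i2) (mesh_normal j)
   + g (tri j i1) *: cross (mesh_vtx j i2 - mesh_vtx j i0) (mesh_normal j)
   + g (tri j i2) *: cross (mesh_vtx j i0 - mesh_vtx j i1) (mesh_normal j)).
Definition mesh_sgradv (g : 'I_N -> vec R) (j : 'I_J) : 'M[R]_3 :=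
  \matrix_(i < 3, c < 3) (mesh_sgrad (fun v => g v 0 i) j) 0 c.

(* mass-lumped inner products; a function continuous on each closed
   triangle is represented by its vertex limits u j k = u((q_{j_k})^-) *)
Definition lip (u v : 'I_J -> 'I_3 -> R) : R :=
  3^-1 * \sum_(j < J) \sum_(k < 3) mesh_area j * (u j k * v j k).
Definition lipv (u v : 'I_J -> 'I_3 -> vec R) : R :=
  3^-1 * \sum_(j < J) \sum_(k < 3) mesh_area j * dot (u j k) (v j k).
Definition lipm (U V : 'I_J -> 'I_3 -> 'M[R]_3) : R :=
  3^-1 * \sum_(j < J) \sum_(k < 3) mesh_area j * frob (U j k) (V j k).

Definition nondeg_mesh : Prop := forall j : 'I_J, mesh_jac j != 0.
End Mesh.

Definition mesh_lift {T : Type} {N J : nat} (tri : 'I_J -> 'I_3 -> 'I_N) (g : 'I_N -> T)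
  : 'I_J -> 'I_3 -> T := fun j k => g (tri j k).

(* combinatorial closedness of the triangulation: each triangle has three
   distinct vertices, every vertex belongs to some triangle, and every
   oriented edge (a,b) of a triangle occurs reversed, (b,a), in exactly one
   triangle (so the surface has no boundary and is consistently oriented). *)
Definition closed_mesh (N J : nat) (tri : 'I_J -> 'I_3 -> 'I_N) : Prop :=
  [/\ forall j, injective (tri j),
      forall v : 'I_N, exists j k, tri j k = v &
      forall (j : 'I_J) (k : 'I_3), exists! jk : 'I_J * 'I_3,
        tri jk.1 jk.2 = tri j (nxt k) /\ tri jk.1 (nxt jk.2) = tri j k].

Definition willmore {R : realType} (N J : nat) (tri : 'I_J -> 'I_3 -> 'I_N)
  (P : 'I_N -> vec R) (H : 'I_N -> R) : R :=
  2^-1 * lip tri P (mesh_lift tri H) (mesh_lift tri H).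

(* Write dX := X^{m+1} - X^m.  Testing the velocity equation with V^{m+1}, the
   tangential equations with alpha^m beta_i^{m+1} and the momentum equation with dX
   shows that its right-hand side at dX equals tau (V^{m+1}, V^{m+1})^h >= 0.  Adding
   the curvature equation tested with H^{m+1}, everything cancels except the term
   coming from 1/2 H^2 grad X^{m+1}, so
     (H^{m+1} - H^m, H^{m+1})^h <= -1/2 (H^{m+1}^2, grad X^{m+1} : grad dX)^h.
   On each triangle |sigma^{m+1}| - |sigma^m| <= |sigma^m| grad X^{m+1} : grad dX:
   in edge coordinates this is a polarization identity for the positive form
   tr(G^{-1} X^T Y) together with 2 sqrt(det G det F) <= tr(adj(G) F) for Gram
   matrices G, F.  With (h - h0) h >= (h^2 - h0^2) / 2 this gives W^{m+1} <= W^m. *)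

From HB Require Import structures.
From mathcomp Require Import all_boot all_order all_algebra.
From mathcomp Require Import reals ring lra.
Set Implicit Arguments. Unset Strict Implicit. Unset Printing Implicit Defensive.
Import Order.TTheory GRing.Theory Num.Theory.
Local Open Scope ring_scope.

Section VectorAlgebra.
Variable R : realType.
Implicit Types (a b u v x y : vec R).

Lemma sum3 (F : 'I_3 -> R) : \sum_(i < 3) F i = F i0 + F i1 + F i2.
Proof.
rewrite !big_ord_recl big_ord0 addr0 addrA.
by congr (_ + _ + _); congr F; apply: val_inj.
Qed.

Lemma vecP u v : u 0 i0 = v 0 i0 -> u 0 i1 = v 0 i1 -> u 0 i2 = v 0 i2 -> u = v.
Proof.
move=> h0 h1 h2; apply/rowP => -[[|[|[|k]]] hk] //.
- by rewrite (_ : Ordinal hk = i0) //; apply: val_inj.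
- by rewrite (_ : Ordinal hk = i1) //; apply: val_inj.
- by rewrite (_ : Ordinal hk = i2) //; apply: val_inj.
Qed.

Lemma dotE u v : dot u v = u 0 i0 * v 0 i0 + u 0 i1 * v 0 i1 + u 0 i2 * v 0 i2.
Proof. exact: sum3. Qed.

Lemma dotC u v : dot u v = dot v u.
Proof. by apply: eq_bigr => i _; rewrite mulrC. Qed.

Lemma dotDl u v x : dot (u + v) x = dot u x + dot v x.
Proof. by rewrite /dot -big_split; apply: eq_bigr => i _; rewrite mxE mulrDl. Qed.

Lemma dotZl (c : R) u x : dot (c *: u) x = c * dot u x.
Proof. by rewrite /dot mulr_sumr; apply: eq_bigr => i _; rewrite mxE mulrA. Qed.

Lemma dotNl u x : dot (- u) x = - dot u x.
Proof. by rewrite -scaleN1r dotZl mulN1r. Qed.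

Lemma dotBl u v x : dot (u - v) x = dot u x - dot v x.
Proof. by rewrite dotDl dotNl. Qed.

Lemma dotBr u v x : dot x (u - v) = dot x u - dot x v.
Proof. by rewrite !(dotC x) dotBl. Qed.

Lemma dotZr (c : R) u x : dot x (c *: u) = c * dot x u.
Proof. by rewrite !(dotC x) dotZl. Qed.

Lemma dot_ge0 u : 0 <= dot u u.
Proof. by apply: sumr_ge0 => i _; rewrite -expr2 sqr_ge0. Qed.

Lemma dot_gt0 u : u != 0 -> 0 < dot u u.
Proof.
move=> u0; rewrite lt_def dot_ge0 andbT; apply: contraNN u0 => /eqP u2.
apply/eqP/rowP => i; rewrite mxE.
have /eqP : u 0 i * u 0 i = 0.
  by apply: (psumr_eq0P _ u2) => // k _; rewrite -expr2 sqr_ge0.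
by rewrite mulf_eq0 orbb => /eqP.
Qed.

Lemma vnorm_sq u : vnorm u ^+ 2 = dot u u.
Proof. by rewrite sqr_sqrtr // dot_ge0. Qed.

Lemma vnorm_ge0 u : 0 <= vnorm u.
Proof. exact: sqrtr_ge0. Qed.

Lemma vnorm_gt0 u : u != 0 -> 0 < vnorm u.
Proof. by move=> u0; rewrite sqrtr_gt0 dot_gt0. Qed.

Lemma dot_cross a b u v :
  dot (cross a b) (cross u v) = dot a u * dot b v - dot a v * dot b u.
Proof. rewrite !dotE !mxE /=; ring. Qed.

Lemma lagrange u v : dot u u * dot v v = dot u v ^+ 2 + dot (cross u v) (cross u v).
Proof. rewrite dot_cross (dotC v u); ring. Qed.

Lemma cross_comb u v (c d : R) : cross u (c *: v - d *: u) = c *: cross u v.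
Proof. apply: vecP; rewrite !mxE /=; ring. Qed.

Lemma cross_cross u v x : cross u (cross v x) = dot u x *: v - dot u v *: x.
Proof. apply: vecP; rewrite !dotE !mxE /=; ring. Qed.

(* |a x b|^2 tr(G^{-1} X^T Y), with G the Gram matrix of (a, b), X = (x1 x2), Y = (y1 y2). *)
Definition gram_form a b x1 x2 y1 y2 : R :=
  dot b b * dot x1 y1 - dot a b * (dot x1 y2 + dot x2 y1) + dot a a * dot x2 y2.

Lemma gram_form_polar a b x1 x2 y1 y2 :
  2 * gram_form a b x1 x2 (x1 - y1) (x2 - y2) =
  gram_form a b x1 x2 x1 x2 + gram_form a b (x1 - y1) (x2 - y2) (x1 - y1) (x2 - y2)
  - gram_form a b y1 y2 y1 y2.
Proof.
rewrite /gram_form !(dotBl, dotBr) (dotC y1 x1) (dotC y2 x2) (dotC y1 x2) (dotC y2 x1).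
ring.
Qed.

Lemma gram_form_edges a b : gram_form a b a b a b = 2 * dot (cross a b) (cross a b).
Proof. rewrite /gram_form dot_cross (dotC b a); ring. Qed.

Lemma gram_form_sqr a b x1 x2 :
  dot a a * gram_form a b x1 x2 x1 x2 =
  dot (dot a a *: x2 - dot a b *: x1) (dot a a *: x2 - dot a b *: x1)
  + dot (cross a b) (cross a b) * dot x1 x1.
Proof.
rewrite /gram_form dot_cross !(dotBl, dotBr, dotZl, dotZr) (dotC b a) (dotC x2 x1).
ring.
Qed.

Lemma dot_gt0_cross a b : cross a b != 0 -> 0 < dot a a.
Proof.
move=> ab0; rewrite lt_def dot_ge0 andbT; apply/eqP => aa0.
have := dot_gt0 ab0; rewrite dot_cross aa0 mul0r sub0r oppr_gt0 (dotC b a).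
by rewrite -expr2 ltNge sqr_ge0.
Qed.

Lemma gram_form_ge0 a b x1 x2 : cross a b != 0 -> 0 <= gram_form a b x1 x2 x1 x2.
Proof.
move=> ab0; have aa0 := dot_gt0_cross ab0.
rewrite -(pmulr_rge0 _ aa0) gram_form_sqr.
by rewrite addr_ge0 ?mulr_ge0 ?dot_ge0.
Qed.

Lemma cross_le_gram_form a b x1 x2 : cross a b != 0 ->
  2 * vnorm (cross a b) * vnorm (cross x1 x2) <= gram_form a b x1 x2 x1 x2.
Proof.
move=> ab0; have aa0 := dot_gt0_cross ab0.
set G := gram_form _ _ _ _ _ _.
set z := dot a a *: x2 - dot a b *: x1.
have hG := gram_form_sqr a b x1 x2; rewrite -/G -/z in hG.
have hz := lagrange x1 z; rewrite cross_comb dotZl dotZr mulrA -expr2 in hz.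
have G0 : 0 <= G by exact: gram_form_ge0.
rewrite -(@ler_pXn2r _ 2) ?nnegrE ?mulr_ge0 ?vnorm_ge0 //.
rewrite !exprMn !vnorm_sq.
move: (dot a a) (dot z z) (dot x1 x1) (dot (cross a b) _) (dot (cross x1 x2) _) (dot x1 z)
  aa0 (dot_ge0 z) (dot_ge0 x1) (dot_ge0 (cross a b)) hG hz => A Z F S S' p hA hZ hF hS hG hz.
have AM_GM : 4 * (S * (F * Z)) <= (A * G) ^+ 2.
  rewrite hG -subr_ge0 (_ : _ - _ = (Z - S * F) ^+ 2); [exact: sqr_ge0 | ring].
have cross_le : S * (A ^+ 2 * S') <= S * (F * Z).
  by rewrite hz ler_wpM2l // lerDr sqr_ge0.
rewrite -(@ler_pM2l _ (A ^+ 2)) ?exprn_gt0 // -exprMn.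
apply: le_trans AM_GM; rewrite [2 ^+ 2]expr2 -natrM; lra.
Qed.

Lemma vnorm_cross_growth a b x1 x2 : cross a b != 0 ->
  vnorm (cross a b) * (vnorm (cross x1 x2) - vnorm (cross a b))
  <= gram_form a b x1 x2 (x1 - a) (x2 - b).
Proof.
move=> ab0.
have := gram_form_polar a b x1 x2 a b.
have := cross_le_gram_form x1 x2 ab0.
have := gram_form_ge0 (x1 - a) (x2 - b) ab0.
rewrite gram_form_edges -vnorm_sq; lra.
Qed.

Implicit Types U V W : 'M[R]_3.

Lemma frobC U V : frob U V = frob V U.
Proof. by rewrite /frob -mxtrace_tr trmx_mul trmxK. Qed.

Lemma frobDr U V W : frob U (V + W) = frob U V + frob U W.
Proof. by rewrite /frob mulmxDr mxtraceD. Qed.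

Lemma frobBr U V W : frob U (V - W) = frob U V - frob U W.
Proof. by rewrite /frob mulmxBr raddfB. Qed.

Lemma frobZr U V (c : R) : frob U (c *: V) = c * frob U V.
Proof. by rewrite /frob -scalemxAr mxtraceZ. Qed.

Lemma frobDl U V W : frob (U + V) W = frob U W + frob V W.
Proof. by rewrite !(frobC _ W) frobDr. Qed.

Lemma frob_cancel U A B C (x y : R) :
  frob U (B - x *: A) + y * frob C U = - frob (x *: A - B - y *: C) U.
Proof. rewrite [frob (_ - _) U]frobC (frobC C U) !frobBr !frobZr; ring. Qed.

Lemma frob_outer u v x y : frob (u^T *m v) (x^T *m y) = dot u x * dot v y.
Proof.
rewrite /frob /mxtrace /dot mulr_suml; under eq_bigr do rewrite mxE.
rewrite exchange_big; apply: eq_bigr => k _; rewrite mulr_sumr.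
by apply: eq_bigr => i _; rewrite !mxE !big_ord1 !mxE mulrACA.
Qed.

(* The basis of span(a, b) dual to (a, b). *)
Definition dual1 a b : vec R :=
  (dot (cross a b) (cross a b))^-1 *: (dot b b *: a - dot a b *: b).
Definition dual2 a b : vec R :=
  (dot (cross a b) (cross a b))^-1 *: (dot a a *: b - dot a b *: a).

Lemma frob_dual a b x1 x2 y1 y2 : cross a b != 0 ->
  frob (x1^T *m dual1 a b + x2^T *m dual2 a b) (y1^T *m dual1 a b + y2^T *m dual2 a b)
  = gram_form a b x1 x2 y1 y2 / dot (cross a b) (cross a b).
Proof.
move=> ab0; have S0 : dot (cross a b) (cross a b) != 0 by rewrite gt_eqF ?dot_gt0.
rewrite !(frobDl, frobDr) !frob_outer /gram_form /dual1 /dual2.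
rewrite !(dotZl, dotZr, dotBl, dotBr) (dotC b a).
move: S0; rewrite dot_cross (dotC b a).
move: (dot a a) (dot b b) (dot a b) (dot x1 y1) (dot x1 y2) (dot x2 y1) (dot x2 y2).
move=> A B D p q r t S0.
by field.
Qed.
End VectorAlgebra.

Section MeshGeometry.
Variables (R : realType) (N J : nat) (tri : 'I_J -> 'I_3 -> 'I_N).
Implicit Types (P Q : 'I_N -> vec R) (j : 'I_J).

Definition mesh_edge P j k : vec R := mesh_vtx tri P j k - mesh_vtx tri P j i0.

Lemma mesh_sgrad_dual P (g : 'I_N -> R) j :
  mesh_sgrad tri P g j =
    (g (tri j i1) - g (tri j i0)) *: dual1 (mesh_edge P j i1) (mesh_edge P j i2)
  + (g (tri j i2) - g (tri j i0)) *: dual2 (mesh_edge P j i1) (mesh_edge P j i2).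
Proof.
rewrite /mesh_sgrad /mesh_normal /dual1 /dual2 /mesh_jac /mesh_edge /mesh_vtx.
move: (P (tri j i0)) (P (tri j i1)) (P (tri j i2)) (g (tri j i0)) (g (tri j i1)) (g (tri j i2)).
move=> p0 p1 p2 g0 g1 g2.
set a := p1 - p0; set b := p2 - p0.
have -> : forall (n : vec R) t,
    t *: (g0 *: cross (p1 - p2) (t *: n) + g1 *: cross (p2 - p0) (t *: n)
          + g2 *: cross (p0 - p1) (t *: n))
    = (t * t) *: ((g1 - g0) *: cross b n - (g2 - g0) *: cross a n).
  by move=> n t; apply: vecP; rewrite !mxE /=; ring.
rewrite -invfM -expr2 vnorm_sq !cross_cross (dotC b a).
move: (dot _ _)^-1 (dot a a) (dot b b) (dot a b) => s A B D.
by apply: vecP; rewrite !mxE /=; ring.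
Qed.

Lemma mesh_sgradv_dual P (g : 'I_N -> vec R) j :
  mesh_sgradv tri P g j =
    (mesh_edge g j i1)^T *m dual1 (mesh_edge P j i1) (mesh_edge P j i2)
  + (mesh_edge g j i2)^T *m dual2 (mesh_edge P j i1) (mesh_edge P j i2).
Proof.
apply/matrixP => i c.
by rewrite [LHS]mxE mesh_sgrad_dual !mxE !big_ord1 !mxE.
Qed.

Lemma mesh_area_ge0 P j : 0 <= mesh_area tri P j.
Proof. by rewrite divr_ge0 ?vnorm_ge0. Qed.

Lemma mesh_area_growth P Q j : mesh_jac tri P j != 0 ->
  mesh_area tri Q j - mesh_area tri P j
  <= mesh_area tri P j * frob (mesh_sgradv tri P Q j)
                              (mesh_sgradv tri P (fun v => Q v - P v) j).
Proof.
move=> nondeg; rewrite !mesh_sgradv_dual frob_dual //.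
have edgeB k : mesh_edge (fun v => Q v - P v) j k = mesh_edge Q j k - mesh_edge P j k.
  by apply/rowP => i; rewrite !mxE; ring.
have := vnorm_cross_growth (mesh_edge Q j i1) (mesh_edge Q j i2) nondeg.
have s0 := vnorm_gt0 nondeg.
rewrite !edgeB /mesh_area -vnorm_sq.
set s := vnorm (mesh_jac tri P j); set s' := vnorm (mesh_jac tri Q j).
set G := gram_form _ _ _ _ _ _ => growth.
rewrite -subr_ge0 (_ : _ - _ = (G - s * (s' - s)) / (2 * s)).
  by rewrite divr_ge0 ?subr_ge0 // mulr_ge0 // ltW.
by field; rewrite gt_eqF.
Qed.
End MeshGeometry.

Section LumpedSums.
Variables (R : realType) (N J : nat) (tri : 'I_J -> 'I_3 -> 'I_N).
Implicit Types (P Q : 'I_N -> vec R) (f g : 'I_J -> 'I_3 -> R).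

Definition lumped P f : R := 3^-1 * \sum_(j < J) \sum_(k < 3) mesh_area tri P j * f j k.

Lemma lipE P u v : lip tri P u v = lumped P (fun j k => u j k * v j k).
Proof. by []. Qed.

Lemma lipvE P u v : lipv tri P u v = lumped P (fun j k => dot (u j k) (v j k)).
Proof. by []. Qed.

Lemma lipmE P U V : lipm tri P U V = lumped P (fun j k => frob (U j k) (V j k)).
Proof. by []. Qed.

Lemma eq_lumped P f g : (forall j k, f j k = g j k) -> lumped P f = lumped P g.
Proof.
by move=> fg; congr (_ * _); apply: eq_bigr => j _; apply: eq_bigr => k _; rewrite fg.
Qed.

Lemma lumpedD P f g : lumped P (fun j k => f j k + g j k) = lumped P f + lumped P g.
Proof.
rewrite /lumped -mulrDr -big_split; congr (_ * _); apply: eq_bigr => j _.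
by rewrite -big_split; apply: eq_bigr => k _; rewrite mulrDr.
Qed.

Lemma lumpedZ P (c : R) f : lumped P (fun j k => c * f j k) = c * lumped P f.
Proof.
rewrite /lumped [RHS]mulrCA; congr (_ * _); rewrite mulr_sumr; apply: eq_bigr => j _.
by rewrite mulr_sumr; apply: eq_bigr => k _; rewrite mulrCA.
Qed.

Lemma ler_lumped P Q f g :
  (forall j k, mesh_area tri Q j * f j k <= mesh_area tri P j * g j k) ->
  lumped Q f <= lumped P g.
Proof.
move=> fg; rewrite ler_pM2l ?invr_gt0 ?ltr0n //.
by apply: ler_sum => j _; apply: ler_sum => k _.
Qed.

Lemma lumped_ge0 P f : (forall j k, 0 <= f j k) -> 0 <= lumped P f.
Proof.
move=> f0; rewrite mulr_ge0 ?invr_ge0 ?ler0n // sumr_ge0 // => j _.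
by rewrite sumr_ge0 // => k _; rewrite mulr_ge0 ?mesh_area_ge0.
Qed.

Lemma lumpedN P f : lumped P (fun j k => - f j k) = - lumped P f.
Proof. by rewrite -mulN1r -lumpedZ; apply: eq_lumped => j k; rewrite mulN1r. Qed.

Lemma willmore_le_lumped P Q (H H' : 'I_N -> R) (g : 'I_J -> R) :
  (forall j, mesh_area tri Q j - mesh_area tri P j <= mesh_area tri P j * g j) ->
  willmore tri Q H' <= willmore tri P H +
    (lip tri P (mesh_lift tri (fun v => H' v - H v)) (mesh_lift tri H')
     + lumped P (fun j k => 2^-1 * H' (tri j k) ^+ 2 * g j)).
Proof.
move=> growth; rewrite /willmore !lipE -!lumpedZ -!lumpedD.
apply: ler_lumped => j k; rewrite /mesh_lift.
have := mulr_ge0 (mesh_area_ge0 tri P j) (sqr_ge0 (H' (tri j k) - H (tri j k))).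
have := ler_wpM2r (sqr_ge0 (H' (tri j k))) (growth j).
lra.
Qed.
End LumpedSums.

Section SchemeStep.
Variables (R : realType) (N J : nat) (tri : 'I_J -> 'I_3 -> 'I_N).
Variables (tau alpha : R) (P Q w : 'I_N -> vec R) (V beta1 beta2 H H' : 'I_N -> R).
Hypothesis tau_gt0 : 0 < tau.
Hypothesis nondeg_P : nondeg_mesh tri P.
Hypothesis normal_velocity : forall phi : 'I_N -> R,
  lip tri P
    (fun j k => dot (tau^-1 *: (Q (tri j k) - P (tri j k))) (mesh_normal tri P j))
    (mesh_lift tri phi)
  = lip tri P (mesh_lift tri V) (mesh_lift tri phi).
Hypothesis tangential1 : forall psi : 'I_N -> R,
  lip tri P (fun j k => dot (Q (tri j k) - P (tri j k)) (mesh_tau1 tri P j))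
    (mesh_lift tri psi) = 0.
Hypothesis tangential2 : forall psi : 'I_N -> R,
  lip tri P (fun j k => dot (Q (tri j k) - P (tri j k)) (mesh_tau2 tri P j))
    (mesh_lift tri psi) = 0.
Hypothesis momentum : forall om : 'I_N -> vec R,
  lipv tri P
    (fun j k => V (tri j k) *: mesh_normal tri P j
       + alpha *: (beta1 (tri j k) *: mesh_tau1 tri P j
                   + beta2 (tri j k) *: mesh_tau2 tri P j))
    (mesh_lift tri om)
  = lipm tri P
    (fun j k => H' (tri j k) *: mesh_sgradv tri P w j
       - (mesh_normal tri P j)^T *m mesh_sgrad tri P H' j
       - (2^-1 * H' (tri j k) ^+ 2) *: mesh_sgradv tri P Q j)
    (fun j k => mesh_sgradv tri P om j).
Hypothesis curvature : forall phi : 'I_N -> R,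
  lip tri P (mesh_lift tri (fun v => H' v - H v)) (mesh_lift tri phi)
  = lipm tri P
    (fun j k => mesh_sgradv tri P (fun v => Q v - P v) j)
    (fun j k => (mesh_normal tri P j)^T *m mesh_sgrad tri P phi j
                - phi (tri j k) *: mesh_sgradv tri P w j).

Lemma momentum_work_ge0 :
  0 <= lipv tri P
    (fun j k => V (tri j k) *: mesh_normal tri P j
       + alpha *: (beta1 (tri j k) *: mesh_tau1 tri P j
                   + beta2 (tri j k) *: mesh_tau2 tri P j))
    (mesh_lift tri (fun v => Q v - P v)).
Proof.
rewrite (_ : lipv _ _ _ _ =
  tau * lip tri P
    (fun j k => dot (tau^-1 *: (Q (tri j k) - P (tri j k))) (mesh_normal tri P j))
    (mesh_lift tri V)
  + lip tri P (fun j k => dot (Q (tri j k) - P (tri j k)) (mesh_tau1 tri P j))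
      (mesh_lift tri (fun v => alpha * beta1 v))
  + lip tri P (fun j k => dot (Q (tri j k) - P (tri j k)) (mesh_tau2 tri P j))
      (mesh_lift tri (fun v => alpha * beta2 v))).
  rewrite normal_velocity tangential1 tangential2 !addr0 mulr_ge0 ?(ltW tau_gt0) //.
  by rewrite lipE lumped_ge0 // => j k; rewrite -expr2 sqr_ge0.
rewrite lipvE !lipE -lumpedZ -!lumpedD; apply: eq_lumped => j k /=.
rewrite /mesh_lift.
move: (Q _ - P _) (mesh_normal tri P j) (mesh_tau1 tri P j) (mesh_tau2 tri P j) => d n t1 t2.
rewrite !(dotDl, dotZl, dotZr) (dotC n) (dotC t1) (dotC t2).
by field; rewrite gt_eqF.
Qed.

Lemma willmore_step : willmore tri Q H' <= willmore tri P H.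
Proof.
apply: le_trans (willmore_le_lumped H H' (fun j => mesh_area_growth Q (nondeg_P j))) _.
rewrite curvature lipmE -lumpedD gerDl.
under eq_lumped => j k do rewrite frob_cancel.
by rewrite lumpedN oppr_le0 -lipmE -momentum momentum_work_ge0.
Qed.

End SchemeStep.

Theorem theorem5p1 (R : realType) (N J : nat) (tri : 'I_J -> 'I_3 -> 'I_N)
  (tau : R) (alpha : nat -> R)
  (X : nat -> 'I_N -> vec R) (V beta1 beta2 H : nat -> 'I_N -> R)
  (w : nat -> 'I_N -> vec R) :
  0 < tau ->
  (forall m, 0 <= alpha m) ->
  closed_mesh tri ->
  (forall m, nondeg_mesh tri (X m)) ->
  (forall m v, vnorm (w m v) = 1) ->
  (forall m (phi : 'I_N -> R),
     lip tri (X m)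
       (fun j k => dot (tau^-1 *: (X m.+1 (tri j k) - X m (tri j k))) (mesh_normal tri (X m) j))
       (mesh_lift tri phi)
     = lip tri (X m) (mesh_lift tri (V m.+1)) (mesh_lift tri phi)) ->
  (forall m (psi : 'I_N -> R),
     lip tri (X m)
       (fun j k => dot (X m.+1 (tri j k) - X m (tri j k)) (mesh_tau1 tri (X m) j))
       (mesh_lift tri psi) = 0) ->
  (forall m (psi : 'I_N -> R),
     lip tri (X m)
       (fun j k => dot (X m.+1 (tri j k) - X m (tri j k)) (mesh_tau2 tri (X m) j))
       (mesh_lift tri psi) = 0) ->
  (forall m (om : 'I_N -> vec R),
     lipv tri (X m)
       (fun j k => V m.+1 (tri j k) *: mesh_normal tri (X m) j
          + alpha m *: (beta1 m.+1 (tri j k) *: mesh_tau1 tri (X m) j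
                        + beta2 m.+1 (tri j k) *: mesh_tau2 tri (X m) j))
       (mesh_lift tri om)
     = lipm tri (X m)
       (fun j k => H m.+1 (tri j k) *: mesh_sgradv tri (X m) (w m) j
          - (mesh_normal tri (X m) j)^T *m mesh_sgrad tri (X m) (H m.+1) j
          - (2^-1 * H m.+1 (tri j k) ^+ 2) *: mesh_sgradv tri (X m) (X m.+1) j)
       (fun j k => mesh_sgradv tri (X m) om j)) ->
  (forall m (phi : 'I_N -> R),
     lip tri (X m) (mesh_lift tri (fun v => H m.+1 v - H m v)) (mesh_lift tri phi)
     = lipm tri (X m)
       (fun j k => mesh_sgradv tri (X m) (fun v => X m.+1 v - X m v) j)
       (fun j k => (mesh_normal tri (X m) j)^T *m mesh_sgrad tri (X m) phi j
                   - phi (tri j k) *: mesh_sgradv tri (X m) (w m) j)) ->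
  forall m,
    willmore tri (X m.+1) (H m.+1) <= willmore tri (X m) (H m)
    /\ willmore tri (X m) (H m) <= willmore tri (X 0) (H 0).
Proof.
(* The tangential terms vanish whatever alpha^m is, and w^m enters only through
   terms that cancel. *)
move=> tau_gt0 _ _ nondeg _ normal tang1 tang2 mom curv.
have step m : willmore tri (X m.+1) (H m.+1) <= willmore tri (X m) (H m).
  exact: willmore_step tau_gt0 (nondeg m) (normal m) (tang1 m) (tang2 m) (mom m) (curv m).
move=> m; split; first exact: step.
elim: m => [|m IHm]; first exact: lexx.
exact: le_trans (step m) IHm.
Qed.
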